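(* Let $\Omega$ be a metrizable compact space and $c$ a capacity on $\mathcal{L}$. Then the Banach space $L^1(c)$ is separable and the unit ball of $L^1(c)^*$ is metrizable compact for the weak* topology $\sigma(L^1(c)^*,L^1(c))$.
   Context: $\mathcal{L}\subset\mathcal{C}_b(\Omega)$ is a linear subspace which is a vector lattice, contains the constants and generates the topology. A capacity on $\mathcal{L}$ is a seminorm $c$ with $c(f)\le c(g)$ whenever $|f|\le|g|$ and $\inf_n c(f_n)=0$ for $f_n\in\mathcal{L}$ decreasing to $0$; it is extended to all functions by $c(f)=\sup\{c(\varphi):\varphi\in\mathcal{L},0\le\varphi\le f\}$ for $f\ge0$ l.s.c. and $c(g)=\inf\{c(f):f\text{ l.s.c.},f\ge|g|\}$. $L^1(c)$ is the Banach space obtained as the quotient by $c$-null elements of the $c$-closure of $\mathcal{L}$ in $\{g:c(g)<\infty\}$ (it contains $\mathcal{C}_b(\Omega)$). *)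

From HB Require Import structures.
From mathcomp Require Import all_boot all_order all_algebra.
From mathcomp Require Import all_classical all_reals all_analysis.
Set Implicit Arguments. Unset Strict Implicit. Unset Printing Implicit Defensive.
Import Order.TTheory GRing.Theory Num.Theory.
Import numFieldNormedType.Exports.
Local Open Scope classical_set_scope.
Local Open Scope ring_scope.

Section Defs.
Context {R : realType} {Omega : topologicalType}.

Definition bounded_continuous (f : Omega -> R) : Prop :=
  continuous f /\ exists M : R, forall x, `|f x| <= M.

Definition admissible_space (L : set (Omega -> R)) : Prop :=
  [/\ (forall f, L f -> bounded_continuous f),
      (forall a (f g : Omega -> R), L f -> L g -> L (fun x => a * f x + g x)),
      (forall f g, L f -> L g ->
          L (fun x => Num.max (f x) (g x)) /\ L (fun x => Num.min (f x) (g x))),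
      (forall a : R, L (fun _ => a)) &
      (* the topology of Omega is the initial topology of L *)
      (forall (x : Omega) (U : set Omega), nbhs x U ->
         exists (s : seq (Omega -> R)) (e : R), [/\ (forall f, f \in s -> L f), 0 < e &
           [set y | forall f, f \in s -> `|f y - f x| < e] `<=` U])].

Definition capacity (L : set (Omega -> R)) (c : (Omega -> R) -> R) : Prop :=
  [/\ (forall f g, L f -> L g -> c (fun x => f x + g x) <= c f + c g),
      (forall a f, L f -> c (fun x => a * f x) = `|a| * c f),
      (forall f g, L f -> L g -> (forall x, `|f x| <= `|g x|) -> c f <= c g) &
      (forall fn : nat -> (Omega -> R),
         (forall n, L (fn n)) ->
         (forall n x, fn n.+1 x <= fn n x) ->
         (forall x, fn n x @[n --> \oo] --> 0) ->
         forall e : R, 0 < e -> exists n, c (fn n) < e)].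

Local Open Scope ereal_scope.

Definition cap_lsc (L : set (Omega -> R)) (c : (Omega -> R) -> R)
  (f : Omega -> \bar R) : \bar R :=
  ereal_sup [set (c phi)%:E | phi in
    [set phi | L phi /\ forall x, (0 <= phi x)%R /\ (phi x)%:E <= f x]].

Definition cap_ext (L : set (Omega -> R)) (c : (Omega -> R) -> R)
  (g : Omega -> R) : \bar R :=
  ereal_inf [set cap_lsc L c f | f in
    [set f : Omega -> \bar R | lower_semicontinuous f /\
       forall x, (`|g x|)%:E <= f x]].

(* the c-closure of L in {g : c(g) < oo}; L^1(c) is its quotient by c-null
   functions *)
Definition L1set (L : set (Omega -> R)) (c : (Omega -> R) -> R) :
  set (Omega -> R) :=
  [set g | cap_ext L c g < +oo /\
     forall e : R, (0 < e)%R -> exists2 phi, L phi &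
        cap_ext L c (fun x => g x - phi x)%R < e%:E].

(* the closed unit ball of the dual L^1(c)^*, represented as the linear
   functionals phi on L1set with |phi g| <= c(g), normalized to vanish
   outside L1set *)
Definition dual_unit_ball (L : set (Omega -> R)) (c : (Omega -> R) -> R) :
  set ((Omega -> R) -> R) :=
  [set phi | [/\ (forall a g h, L1set L c g -> L1set L c h ->
                   phi (fun x => a * g x + h x)%R = (a * phi g + phi h)%R),
                 (forall g, L1set L c g -> (`|phi g|)%:E <= cap_ext L c g) &
                 (forall g, ~ L1set L c g -> phi g = 0%R)]].
End Defs.

Definition metrizable_subset {R : realType} {T : topologicalType} (A : set T)
  : Prop :=
  exists d : T -> T -> R,
    [/\ (forall x y, A x -> A y -> (d x y = 0 <-> x = y)),
        (forall x y, A x -> A y -> d x y = d y x),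
        (forall x y z, A x -> A y -> A z -> d x z <= d x y + d y z) &
        (forall x (U : set T), A x ->
           ((exists V, [/\ open V, V x & V `&` A `<=` U]) <->
            (exists2 e : R, 0 < e & [set y | A y /\ d x y < e] `<=` U)))].

(* Since Omega is compact metric, L is separable for the uniform norm: a
   sequence in L selected by countably many codes (a mesh, a precision and
   rational values on a finite net) approximates every element of L, these
   being uniformly continuous.  The shift inequality c(h) <= c(g) + c(d) for
   |h| <= |g| + d, where c(d) = d c(1) is small, turns uniform density into
   density in L^1(c).  The dual unit ball is a closed set of linear maps in
   the Tychonoff product of the intervals [-c(g), c(g)], hence compact; its
   elements are 1-Lipschitz for c, so they depend continuously on their values
   on the dense sequence, and these values define a metric for the weak*
   topology. *)

Set Implicit Arguments. Unset Strict Implicit. Unset Printing Implicit Defensive.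
From HB Require Import structures.
From mathcomp Require Import all_boot all_order all_algebra.
From mathcomp Require Import all_classical all_reals all_analysis.
From mathcomp Require Import ring lra.
Import Order.TTheory GRing.Theory Num.Theory.
Import numFieldNormedType.Exports.
Local Open Scope classical_set_scope.
Local Open Scope ring_scope.

Section Pointwise.
Context {R : realType} {X : choiceType}.
Local Notation T := {ptws X -> R}.

Lemma eval_continuous (u : X) : continuous (fun phi : T => phi u).
Proof. by move=> phi; have := @proj_continuous X (fun=> R) u phi; exact. Qed.

Lemma near_eval (phi : T) (u : X) (eps : R) : 0 < eps ->
  nbhs phi [set psi : T | `|phi u - psi u| < eps].
Proof.
by move=> eps0; have := @eval_continuous u phi; move=> /(_ _ (nbhsx_ballx _ _ eps0)).
Qed.

Lemma ptws_cvg_eval (F : set_system T) (phi : T) : Filter F ->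
  (forall u, (fun psi : T => psi u) @ F --> phi u) -> F --> phi.
Proof. by move=> FF; have [_] := @pointwise_cvgP (discrete_topology X) R F phi FF. Qed.

Lemma closed_linear_on (S : set X) (comb : R -> X -> X -> X) :
  closed [set phi : T | forall a g h, S g -> S h ->
    phi (comb a g h) = a * phi g + phi h].
Proof.
rewrite (_ : [set phi : T | _] =
    \bigcap_(agh in [set agh : R * X * X | S agh.1.2 /\ S agh.2])
      [set phi : T | phi (comb agh.1.1 agh.1.2 agh.2)
                       - (agh.1.1 * phi agh.1.2 + phi agh.2) = 0]).
  apply: closed_bigI => -[[a g] h] _.
  apply: (@preimage_closed _ _
    (fun phi : T => phi (comb a g h) - (a * phi g + phi h)) [set x | x = 0]).
    move=> phi _.
    have ev w : (fun psi : T => psi w) @ phi --> phi w by exact: eval_continuous.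
    apply: (@cvgB _ R^o T (nbhs phi) _ (fun psi => psi (comb a g h))
      (fun psi => a * psi g + psi h)) => //.
    apply: (@cvgD _ R^o T (nbhs phi) _ (fun psi => a * psi g) (fun psi => psi h)) => //.
    exact: (@cvgM _ T (nbhs phi) _ (fun=> a) (fun psi => psi g)) (cvg_cst _) (ev g).
  exact: closed_eq.
apply/seteqP; split => phi /= H.
  by move=> [[a g] h] [/= Sg Sh]; rewrite H // subrr.
by move=> a g h Sg Sh; apply/eqP; rewrite -subr_eq0; apply/eqP/(H (a, g, h)).
Qed.

End Pointwise.

Lemma ratr_approx {R : realType} (t eta : R) : 0 < eta ->
  exists q : rat, `|t - ratr q| < eta.
Proof.
move=> eta0; have /rat_in_itvoo [q] : t - eta < t + eta by lra.
rewrite in_itv /= => /andP [h1 h2]; exists q.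
by rewrite ltr_norml; apply/andP; split; lra.
Qed.

Lemma seq_radius_lbound {R : realType} {T : eqType} (s : seq T) (rad : T -> R) :
  (forall x, 0 < rad x) -> exists2 r, 0 < r & forall x, x \in s -> r <= rad x.
Proof.
move=> rad0; elim: s => [|a s [r r0 hr]]; first by exists 1.
exists (Num.min r (rad a)); first by rewrite lt_min r0 rad0.
move=> x; rewrite inE => /orP [/eqP ->|xs]; first by rewrite ge_min lexx orbT.
by rewrite ge_min hr.
Qed.

Lemma countable_selection (I : countType) (X : Type) (A : set X) (P : I -> set X)
  (x0 : X) : A x0 -> exists2 e : nat -> X, (forall n, A (e n)) &
    forall j, (exists2 x, A x & P j x) -> exists n, P j (e n).
Proof.
move=> Ax0.
have /choice [pick pickP] :
    forall j, exists x, A x /\ ((exists2 y, A y & P j y) -> P j x).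
  move=> j; have [[y Ay Pjy]|nP] := pselect (exists2 y, A y & P j y).
    by exists y.
  by exists x0; split => // /nP.
exists (fun n => if unpickle n is Some j then pick j else x0).
  by move=> n; case: unpickle => [j|] //; have [] := pickP j.
by move=> j Pj; exists (pickle j); rewrite pickleK; have [_] := pickP j; exact.
Qed.

Section CompactMetric.
Context {R : realType} {Omega : pseudoMetricType R}.
Hypothesis compactOmega : compact [set: Omega].

Lemma compact_ball_cover (rad : Omega -> R) : (forall x, 0 < rad x) ->
  exists s : seq Omega, forall y, exists2 x, x \in s & ball x (rad x) y.
Proof.
move=> rad0; apply: contrapT => ncov.
pose uncovered (s : seq Omega) := [set y | forall x, x \in s -> ~ ball x (rad x) y].
have FF : Filter (filter_from [set: seq Omega] uncovered).
  apply: filter_from_filter; first by exists [::].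
  move=> s1 s2 _ _; exists (s1 ++ s2) => // y hy; split => x xs;
    by apply: hy; rewrite mem_cat xs ?orbT.
have PF : ProperFilter (filter_from [set: seq Omega] uncovered).
  apply: filter_from_proper => s _; apply/set0P/negP => /eqP U0.
  apply: ncov; exists s => y; apply: contrapT => hy.
  have : uncovered s y by move=> x xs bxy; apply: hy; exists x.
  by rewrite U0.
have [x [_ clx]] := compactOmega PF filterT.
have [y [Uy bxy]] := clx (uncovered [:: x]) (ball x (rad x))
  (ex_intro2 _ _ [:: x] I (@subset_refl _ _)) (nbhsx_ballx _ _ (rad0 x)).
by apply: (Uy x) => //; rewrite inE.
Qed.

Lemma compact_unif_continuous (f : Omega -> R) : continuous f ->
  forall eps, 0 < eps -> exists2 r, 0 < r &
    forall x y, ball x r y -> `|f x - f y| < eps.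
Proof.
move=> cf eps eps0; have eps20 : 0 < eps / 2 by apply: divr_gt0.
have /choice [rad radP] : forall x, exists r, 0 < r /\
    forall y, ball x (r + r) y -> `|f x - f y| < eps / 2.
  move=> x; have /nbhs_ballP [r /= r0 hr] := cf x _ (nbhsx_ballx (f x) _ eps20).
  exists (r / 2); split; first exact: divr_gt0.
  by move=> y; rewrite -splitr => /hr.
have rad0 x : 0 < rad x by have [] := radP x.
have [s hs] := compact_ball_cover rad0.
have [r r0 hr] := seq_radius_lbound s rad0.
exists r => // y z yz.
have [x xs xy] := hs y.
have [_ osc] := radP x.
have xz : ball x (rad x + rad x) z.
  by apply: (le_ball (e1 := rad x + r)); [rewrite lerD2l hr | exact: ball_triangle xy yz].
have xy' : ball x (rad x + rad x) y.
  by apply: (le_ball (e1 := rad x)) => //; rewrite lerDl ltW.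
rewrite (splitr eps); apply: le_lt_trans (ltrD (osc _ xy') (osc _ xz)).
rewrite (_ : f y - f z = - (f x - f y) + (f x - f z)); last by ring.
by apply: le_trans (ler_normD _ _) _; rewrite normrN.
Qed.

Lemma uniformly_dense_seq (L : set (Omega -> R)) :
  (forall f, L f -> continuous f) -> L (fun=> 0) ->
  exists2 e : nat -> Omega -> R, (forall n, L (e n)) &
    forall f, L f -> forall d, 0 < d -> exists n, forall x, `|f x - e n x| <= d.
Proof.
move=> Lc L0.
have /choice [net netP] : forall m : nat, exists s : seq Omega,
    forall y, exists2 x, x \in s & ball x m.+1%:R^-1 y.
  by move=> m; apply: (@compact_ball_cover (fun=> m.+1%:R^-1)).
(* A code (m, k, q) asks for oscillation below 1/(k+1) on balls of radius
   1/(m+1) and for values within 1/(k+1) of the rationals q on the net. *)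
pose fits (j : nat * nat * seq rat) (f : Omega -> R) :=
  (forall y z, ball y j.1.1.+1%:R^-1 z -> `|f y - f z| < j.1.2.+1%:R^-1) /\
  (forall x, x \in net j.1.1 ->
     `|f x - ratr (nth 0 j.2 (index x (net j.1.1)))| < j.1.2.+1%:R^-1).
have [e eL eP] := countable_selection fits L0.
exists e => // f Lf d d0.
have [k hk] : exists k : nat, k.+1%:R^-1 < d / 4.
  by have [k] := ltr_add_invr (divr_gt0 d0 (ltr0n _ 4)); rewrite add0r; exists k.
set eta := k.+1%:R^-1 in hk.
have eta0 : 0 < eta by rewrite invr_gt0.
have [r r0 hr] := compact_unif_continuous (Lc _ Lf) eta0.
have [m hm] := ltr_add_invr r0; rewrite add0r in hm.
have /choice [approx approxP] : forall t : R, exists q : rat, `|t - ratr q| < eta.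
  by move=> t; exact: ratr_approx.
pose q := [seq approx (f x) | x <- net m].
have q_net x : x \in net m -> `|f x - ratr (nth 0 q (index x (net m)))| < eta.
  by move=> xN; rewrite (nth_map x) ?index_mem // nth_index.
have [n [osc_e net_e]] : exists n, fits (m, k, q) (e n).
  apply: eP; exists f => //; split => /= [y z yz|x /q_net //].
  by apply: hr; exact: le_ball (ltW hm) _ yz.
exists n => y; have [x xN xy] := netP m y.
have := hr _ _ (le_ball (ltW hm) xy); have := osc_e _ _ xy.
have := net_e _ xN; have := q_net _ xN.
rewrite /= -/eta !ltr_norml ler_norml.
move=> /andP[h1 h1'] /andP[h2 h2'] /andP[h3 h3'] /andP[h4 h4'].
apply/andP; split; lra.
Qed.

End CompactMetric.

Section LowerSemicontinuous.
Context {R : realType} {T : topologicalType}.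
Local Open Scope ereal_scope.

Lemma lower_semicontinuous_cst (M : \bar R) : lower_semicontinuous (fun _ : T => M).
Proof. by move=> x a Ma; exists setT => //; exact: filterT. Qed.

Lemma lower_semicontinuousDr (f : T -> \bar R) (d : R) : lower_semicontinuous f ->
  lower_semicontinuous (fun x => f x + d%:E).
Proof.
move=> lf x a; rewrite -lteBlDr // -EFinB => /lf [V Vx HV].
by exists V => // y /HV; rewrite EFinB lteBlDr.
Qed.

End LowerSemicontinuous.

Section Capacity.
Context {R : realType} {Omega : topologicalType}.
Variables (L : set (Omega -> R)) (c : (Omega -> R) -> R).
Hypothesis admL : admissible_space L.
Hypothesis capc : capacity L c.

Lemma L_cst a : L (fun=> a).
Proof. by case: admL. Qed.

Lemma L_add f g : L f -> L g -> L (fun x => f x + g x).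
Proof.
case: admL => _ Llin _ _ _ Lf Lg.
by have := Llin 1 _ _ Lf Lg; under eq_fun do rewrite mul1r.
Qed.

Lemma L_sub f g : L f -> L g -> L (fun x => f x - g x).
Proof.
case: admL => _ Llin _ _ _ Lf Lg.
by have := Llin (-1) _ _ Lg Lf; under eq_fun do rewrite mulN1r addrC.
Qed.

Lemma L_max f g : L f -> L g -> L (fun x => Num.max (f x) (g x)).
Proof. by case: admL => _ _ Lmax _ _ Lf Lg; case: (Lmax _ _ Lf Lg). Qed.

Lemma L_continuous f : L f -> continuous f.
Proof. by case: admL => Lbc _ _ _ _ /Lbc []. Qed.

Lemma L_bounded f : L f -> exists M, forall x, `|f x| <= M.
Proof. by case: admL => Lbc _ _ _ _ /Lbc []. Qed.

Lemma cap_le f g : L f -> L g -> (forall x, `|f x| <= `|g x|) -> c f <= c g.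
Proof. by case: capc => _ _ mono _; exact: mono. Qed.

Lemma cap_subadd f g : L f -> L g -> c (fun x => f x + g x) <= c f + c g.
Proof. by case: capc => subadd _ _ _; exact: subadd. Qed.

Lemma cap_cst a : c (fun=> a) = `|a| * c (fun=> 1).
Proof.
case: capc => _ hom _ _; rewrite -hom; last exact: L_cst.
by under [in RHS]eq_fun do rewrite mulr1.
Qed.

Lemma cap0 : c (fun=> 0) = 0.
Proof. by rewrite cap_cst normr0 mul0r. Qed.

Lemma cap_cst_small eps : 0 < eps -> exists2 d, 0 < d & c (fun=> d) < eps.
Proof.
move=> eps0; have c1 : 0 <= c (fun=> 1).
  by rewrite -cap0; apply: cap_le => [||x]; rewrite ?normr0 //; exact: L_cst.
have c1pos : 0 < c (fun=> 1) + 1 by apply: ltr_wpDl.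
exists (eps / (c (fun=> 1) + 1)); first exact: divr_gt0.
rewrite cap_cst gtr0_norm; last exact: divr_gt0.
by rewrite mulrAC ltr_pdivrMr // ltr_pM2l // ltrDl.
Qed.

Local Open Scope ereal_scope.

Lemma cap_ext_ge0 g : 0 <= cap_ext L c g.
Proof.
apply: le_ereal_inf_tmp => _ [f [_ hf] <-].
apply: le_ereal_sup_tmp; exists 0%:E; last by [].
exists (fun=> 0%R); last by rewrite cap0.
split => [|x]; first exact: L_cst.
by split => //; apply: le_trans (hf x); rewrite lee_fin.
Qed.

Lemma cap_ext_le_lsc g (f : Omega -> \bar R) : lower_semicontinuous f ->
  (forall x, (`|g x|)%:E <= f x) -> cap_ext L c g <= cap_lsc L c f.
Proof. by move=> lf hf; apply: ereal_inf_lbound; exists f. Qed.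

Lemma cap_ext_le_cst g (M : R) : (forall x, `|g x| <= M)%R ->
  cap_ext L c g <= (c (fun=> M))%:E.
Proof.
move=> hM; apply: (@le_trans _ _ (cap_lsc L c (fun=> M%:E))).
  apply: cap_ext_le_lsc => [|x]; first exact: lower_semicontinuous_cst.
  by rewrite lee_fin.
apply: ge_ereal_sup => _ [phi [Lphi hphi] <-]; rewrite lee_fin.
apply: cap_le => // [|x]; first exact: L_cst.
have [phi0 phiM] := hphi x; rewrite ger0_norm // -lee_fin.
by apply: le_trans phiM _; rewrite lee_fin ler_norm.
Qed.

(* Any psi <= f + d in L splits as (psi - d)^+ <= f plus the constant d. *)
Lemma cap_lsc_shift (f : Omega -> \bar R) (d : R) : (0 <= d)%R ->
  (forall x, 0 <= f x) ->
  cap_lsc L c (fun x => f x + d%:E) <= cap_lsc L c f + (c (fun=> d))%:E.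
Proof.
move=> d0 f0; apply: ge_ereal_sup => _ [psi [Lpsi hpsi] <-].
pose psi' x := Num.max (psi x - d)%R 0%R.
have Lpsi' : L psi' by apply: L_max; [apply: L_sub => //|]; exact: L_cst.
have psi'0 x : (0 <= psi' x)%R by rewrite /psi' le_max lexx orbT.
have psi'f : (c psi')%:E <= cap_lsc L c f.
  apply: ereal_sup_ubound; exists psi' => //; split => // x; split => //.
  have [_ psif] := hpsi x; rewrite /psi'.
  case: (leP (psi x - d)%R 0%R) => _; first exact: f0.
  by rewrite EFinB leeBlDr.
apply: (@le_trans _ _ ((c psi' + c (fun=> d))%:E)); last by rewrite EFinD leeD2r.
rewrite lee_fin; apply: le_trans (cap_subadd Lpsi' (L_cst d)).
apply: cap_le => // [|x]; first by apply: L_add => //; exact: L_cst.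
have [psi0 _] := hpsi x; rewrite ger0_norm // ger0_norm ?addr_ge0 //.
by rewrite -lerBlDr le_max lexx.
Qed.

Lemma cap_ext_shift g h (d : R) : (0 <= d)%R ->
  (forall x, `|h x| <= `|g x| + d)%R ->
  cap_ext L c h <= cap_ext L c g + (c (fun=> d))%:E.
Proof.
move=> d0 hg; rewrite -leeBlDr //; apply: le_ereal_inf_tmp => _ [f [lf hf] <-].
rewrite leeBlDr //; apply: le_trans (cap_lsc_shift d0 _); last first.
  by move=> x; exact: le_trans (hf x).
apply: cap_ext_le_lsc; first exact: lower_semicontinuousDr.
by move=> x; apply: le_trans (leeD2r _ (hf x)); rewrite -EFinD lee_fin.
Qed.

Lemma L_subset_L1set : L `<=` L1set L c.
Proof.
move=> phi Lphi; have [M hM] := L_bounded Lphi; split.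
  by apply: le_lt_trans (cap_ext_le_cst hM) _; exact: ltey.
move=> e e0; exists phi => //.
apply: le_lt_trans (@cap_ext_le_cst _ 0%R _) _; last by rewrite cap0 lte_fin.
by move=> x; rewrite subrr normr0.
Qed.

Lemma L1set_cap_ext_fin g : L1set L c g -> cap_ext L c g \is a fin_num.
Proof. by case=> fing _; rewrite ge0_fin_numE // cap_ext_ge0. Qed.

Lemma L1setB g d : L1set L c g -> L d -> L1set L c (fun x => g x - d x)%R.
Proof.
move=> [fing approx] Ld; have [M hM] := L_bounded Ld; split.
  apply: le_lt_trans (@cap_ext_shift g _ `|M|%R (normr_ge0 _) _) _.
    move=> x; apply: le_trans (ler_normB _ _) _; rewrite lerD2l.
    exact: le_trans (hM x) (ler_norm _).
  by rewrite lte_add_pinfty // ltey.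
move=> e e0; have [psi Lpsi hpsi] := approx e e0.
exists (fun x => psi x - d x)%R; first exact: L_sub.
by under eq_fun do rewrite opprB addrA subrK.
Qed.

Lemma L1set_approx (E : set (Omega -> R)) g (eps : R) : L1set L c g -> (0 < eps)%R ->
  (forall phi, L phi -> forall d : R, (0 < d)%R ->
     exists2 p, E p & forall x, `|phi x - p x| <= d)%R ->
  exists2 p, E p & cap_ext L c (fun x => g x - p x)%R < eps%:E.
Proof.
move=> [_ approx] eps0 denseE.
have eps20 : (0 < eps / 2)%R by apply: divr_gt0.
have [psi Lpsi gpsi] := approx _ eps20.
have [d d0 cd] := cap_cst_small eps20.
have [p Ep psip] := denseE _ Lpsi _ d0.
exists p => //.
apply: le_lt_trans (@cap_ext_shift (fun x => g x - psi x)%R _ d (ltW d0) _) _.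
  move=> x; apply: le_trans (lerD (lexx _) (psip x)).
  have -> : (g x - p x = (g x - psi x) + (psi x - p x))%R by rewrite addrA subrK.
  exact: ler_normD.
by rewrite [eps]splitr EFinD lteD // lte_fin.
Qed.

End Capacity.

Lemma ler_min_normD {R : realDomainType} (w a b : R) : 0 <= w ->
  Num.min w `|a + b| <= Num.min w `|a| + Num.min w `|b|.
Proof.
move=> w0; have := ler_normD a b; have := normr_ge0 a; have := normr_ge0 b.
have : Num.min w `|a + b| <= w by rewrite ge_min lexx.
have : Num.min w `|a + b| <= `|a + b| by rewrite ge_min lexx orbT.
by case: (leP w `|a|) => ha; case: (leP w `|b|) => hb; lra.
Qed.

Section DualBall.
Context {R : realType} {Omega : topologicalType}.
Variables (L : set (Omega -> R)) (c : (Omega -> R) -> R).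
Hypothesis admL : admissible_space L.
Hypothesis capc : capacity L c.
Local Notation B := (dual_unit_ball L c).
Local Notation T := {ptws (Omega -> R) -> R}.

Lemma dual_ball_linear phi a g h : B phi -> L1set L c g -> L1set L c h ->
  phi (fun x => a * g x + h x) = a * phi g + phi h.
Proof. by case=> lin _ _; exact: lin. Qed.

Lemma dual_ball_le phi g : B phi -> L1set L c g -> ((`|phi g|)%:E <= cap_ext L c g)%E.
Proof. by case=> _ bnd _; exact: bnd. Qed.

Lemma dual_ball_out phi g : B phi -> ~ L1set L c g -> phi g = 0.
Proof. by case=> _ _ out; exact: out. Qed.

Lemma dual_ball_leB phi g d : B phi -> L1set L c g -> L d ->
  ((`|phi g - phi d|)%:E <= cap_ext L c (fun x => g x - d x)%R)%E.
Proof.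
move=> Bphi g1 Ld.
have := dual_ball_linear (-1) Bphi (L_subset_L1set admL capc Ld) g1.
rewrite mulN1r addrC => <-; under eq_fun do rewrite mulN1r addrC.
by apply: dual_ball_le => //; exact: L1setB.
Qed.

(* The ball is a closed set of linear maps inside the Tychonoff product of the
   intervals [-c(g), c(g)], with {0} for g outside L1set. *)
Lemma dual_ball_compact : compact (B : set T).
Proof.
pose A (g : Omega -> R) : set R := if pselect (L1set L c g) then
  `[- fine (cap_ext L c g), fine (cap_ext L c g)]%classic else [set 0].
have -> : (B : set T) = [set phi : T | forall g, A g (phi g)] `&`
    [set phi : T | forall a g h, L1set L c g -> L1set L c h ->
      phi (fun x => a * g x + h x) = a * phi g + phi h].
  apply/seteqP; split => [phi Bphi|phi [inA lin]].
    split; last by move=> a g h; exact: dual_ball_linear.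
    move=> g; rewrite /A; case: pselect => g1; last exact: dual_ball_out.
    have := dual_ball_le Bphi g1.
    by rewrite -(fineK (L1set_cap_ext_fin admL capc g1)) lee_fin /= in_itv /= -ler_norml.
  split => // g; have := inA g; rewrite /A; case: pselect => // g1.
  by rewrite /= in_itv /= -ler_norml -(fineK (L1set_cap_ext_fin admL capc g1)) lee_fin.
apply: compact_closedI; last exact: closed_linear_on.
apply: tychonoff => g; rewrite /A; case: pselect => ?; first exact: segment_compact.
exact: compact_set1.
Qed.

Section CountableTest.
Variable e : nat -> Omega -> R.
Hypothesis eL : forall n, L (e n).
Hypothesis e_dense : forall f, L f -> forall d, 0 < d ->
  exists n, forall x, `|f x - e n x| <= d.

Lemma L1set_approx_seq g eps : L1set L c g -> 0 < eps ->
  exists n, (cap_ext L c (fun x => g x - e n x)%R < eps%:E)%E.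
Proof.
move=> g1 eps0; have range_dense f : L f -> forall d, 0 < d ->
    exists2 p, range e p & forall x, `|f x - p x| <= d.
  by move=> Lf d d0; have [n fn] := e_dense Lf d0; exists (e n) => //; exists n.
by have [_ [n _ <-] gn] := L1set_approx admL capc g1 eps0 range_dense; exists n.
Qed.

Lemma dual_ball_eval_approx g eps : L1set L c g -> 0 < eps ->
  exists n, forall phi psi, B phi -> B psi ->
    `|phi g - psi g| < `|phi (e n) - psi (e n)| + eps.
Proof.
move=> g1 eps0; have [n gn] := L1set_approx_seq g1 (divr_gt0 eps0 (ltr0n _ 2)).
exists n => phi psi Bphi Bpsi.
have := le_lt_trans (dual_ball_leB Bphi g1 (eL n)) gn; rewrite lte_fin => phin.
have := le_lt_trans (dual_ball_leB Bpsi g1 (eL n)) gn; rewrite lte_fin => psin.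
have -> : phi g - psi g =
    (phi (e n) - psi (e n)) + ((phi g - phi (e n)) - (psi g - psi (e n))) by ring.
apply: le_lt_trans (ler_normD _ _) _; rewrite ltrD2l [eps]splitr.
by apply: le_lt_trans (ler_normB _ _) _; exact: ltrD.
Qed.

Lemma dual_ball_eq phi psi : B phi -> B psi ->
  (forall n, phi (e n) = psi (e n)) -> phi = psi.
Proof.
move=> Bphi Bpsi eq_e; apply/funext => g.
have [g1|g1] := pselect (L1set L c g); last by rewrite !dual_ball_out.
apply/eqP; rewrite -subr_eq0 -normr_le0; apply/ler_addgt0Pr => eps eps0.
have [n gn] := dual_ball_eval_approx g1 eps0.
by have := gn _ _ Bphi Bpsi; rewrite eq_e subrr normr0 !add0r => /ltW.
Qed.

(* Capping coordinate n at 1/(n+1) makes the distance small as soon as finitely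
   many coordinates are close, so distance balls and pointwise neighbourhoods
   agree on the ball. *)
Definition dual_dist (phi psi : (Omega -> R) -> R) : R :=
  sup [set Num.min n.+1%:R^-1 `|phi (e n) - psi (e n)| | n in [set: nat]].

Lemma dual_dist_ub phi psi n :
  Num.min n.+1%:R^-1 `|phi (e n) - psi (e n)| <= dual_dist phi psi.
Proof.
apply: ub_le_sup; last by exists n.
exists 1 => _ [m _ <-]; rewrite ge_min invr_le1 ?ler1n //.
by rewrite unitfE pnatr_eq0.
Qed.

Lemma dual_dist_le phi psi r :
  (forall n, Num.min n.+1%:R^-1 `|phi (e n) - psi (e n)| <= r) -> dual_dist phi psi <= r.
Proof.
move=> ub; apply: ge_sup => [|_ [n _ <-] //].
by exists (Num.min 1^-1 `|phi (e 0) - psi (e 0)|), 0%N.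
Qed.

Lemma dual_dist_ge0 phi psi : 0 <= dual_dist phi psi.
Proof.
by apply: le_trans (dual_dist_ub phi psi 0); rewrite le_min invr_ge0 ler0n normr_ge0.
Qed.

Lemma dual_distxx phi : dual_dist phi phi = 0.
Proof.
apply/eqP; rewrite eq_le dual_dist_ge0 andbT; apply: dual_dist_le => n.
by rewrite subrr normr0 ge_min lexx orbT.
Qed.

Lemma dual_distC phi psi : dual_dist phi psi = dual_dist psi phi.
Proof.
by rewrite /dual_dist; congr sup; apply/seteqP; split => _ [n _ <-]; exists n => //;
  rewrite distrC.
Qed.

Lemma dual_dist_triangle phi psi chi :
  dual_dist phi chi <= dual_dist phi psi + dual_dist psi chi.
Proof.
apply: dual_dist_le => n.
apply: le_trans (lerD (dual_dist_ub phi psi n) (dual_dist_ub psi chi n)).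
have -> : phi (e n) - chi (e n) = (phi (e n) - psi (e n)) + (psi (e n) - chi (e n)).
  by rewrite addrA subrK.
by apply: ler_min_normD; rewrite invr_ge0 ler0n.
Qed.

Lemma dual_dist_eq0 phi psi : B phi -> B psi -> dual_dist phi psi = 0 -> phi = psi.
Proof.
move=> Bphi Bpsi d0; apply: dual_ball_eq => // n.
have := dual_dist_ub phi psi n; rewrite d0 ge_min leNgt invr_gt0 ltr0n /=.
by rewrite normr_le0 subr_eq0 => /eqP.
Qed.

Lemma dual_dist_lt_eval phi psi n eta :
  dual_dist phi psi < Num.min n.+1%:R^-1 eta -> `|phi (e n) - psi (e n)| < eta.
Proof.
move=> small; have := le_lt_trans (dual_dist_ub phi psi n) small.
rewrite lt_min => /andP[]; rewrite gt_min ltxx /= => en_lt.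
by rewrite min_r // ltW.
Qed.

Lemma dual_dist_eval_small phi t eta : B phi -> 0 < eta ->
  exists2 eps, 0 < eps & forall psi, B psi -> dual_dist phi psi < eps ->
    `|phi t - psi t| < eta.
Proof.
move=> Bphi eta0; have [t1|t1] := pselect (L1set L c t); last first.
  by exists 1 => // psi Bpsi _; rewrite !dual_ball_out // subrr normr0.
have eta20 : 0 < eta / 2 by apply: divr_gt0.
have [n tn] := dual_ball_eval_approx t1 eta20.
exists (Num.min n.+1%:R^-1 (eta / 2)); first by rewrite lt_min eta20 invr_gt0 ltr0n.
move=> psi Bpsi small; apply: lt_trans (tn _ _ Bphi Bpsi) _.
by rewrite [X in _ < X]splitr ltrD2r; exact: dual_dist_lt_eval small.
Qed.

Lemma dual_ball_open_dist_ball (phi : T) (V : set T) : B phi -> open V -> V phi ->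
  exists2 eps, 0 < eps &
    forall psi, B psi -> dual_dist phi psi < eps -> V psi.
Proof.
move=> Bphi oV Vphi.
pose F := filter_from [set eps : R | 0 < eps]
  (fun eps => [set psi : T | B psi /\ dual_dist phi psi < eps]).
have FF : Filter F.
  apply: filter_from_filter; first by exists 1; rewrite /= ltr01.
  move=> i j i0 j0; exists (Num.min i j); first by rewrite /= lt_min i0 j0.
  by move=> psi [Bpsi]; rewrite lt_min => /andP[].
have : F --> phi.
  apply: ptws_cvg_eval => t; apply/cvgrPdist_lt => eta eta0.
  have [eps eps0 small] := dual_dist_eval_small t Bphi eta0.
  by exists eps => // psi [Bpsi]; exact: small.
move=> /(_ V (open_nbhs_nbhs (conj oV Vphi))) [eps eps0 epsV].
by exists eps => // psi Bpsi dpsi; exact: epsV.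
Qed.

Lemma dual_dist_ball_open (phi : T) eps : 0 < eps ->
  exists V : set T, [/\ open V, V phi & forall psi, V psi -> dual_dist phi psi < eps].
Proof.
move=> eps0; have eps20 : 0 < eps / 2 by apply: divr_gt0.
have [K hK] := ltr_add_invr eps20; rewrite add0r in hK.
pose W m := [set psi : T | forall n, (n < m)%N -> `|phi (e n) - psi (e n)| < eps / 2].
have nbhsW m : nbhs phi (W m).
  elim: m => [|m IH]; first by apply: filterS filterT => psi _ n.
  apply: filterS (filterI IH (near_eval phi (e m) eps20)) => psi [Wpsi m_psi] n.
  by rewrite ltnS leq_eqVlt => /orP [/eqP -> //|]; exact: Wpsi.
exists (interior (W K.+1)); split; [exact: open_interior | exact: nbhsW |].
move=> psi /interior_subset Wpsi.
apply: le_lt_trans (@dual_dist_le _ _ (eps / 2) _) _; last by lra.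
move=> n; rewrite ge_min; case: (ltnP n K.+1) => Kn.
  by apply/orP; right; apply/ltW/Wpsi.
apply/orP; left; apply: ltW; apply: le_lt_trans hK.
by rewrite lef_pV2 ?posrE ?ltr0n // ler_nat; exact: leqW.
Qed.

Lemma dual_ball_metrizable : metrizable_subset (R := R) (B : set T).
Proof.
exists dual_dist; split.
- move=> phi psi Bphi Bpsi; split => [|->]; last exact: dual_distxx.
  exact: dual_dist_eq0.
- by move=> phi psi _ _; exact: dual_distC.
- by move=> phi psi chi _ _ _; exact: dual_dist_triangle.
move=> phi U Bphi; split.
  case=> V [oV Vphi VU]; have [eps eps0 epsV] := dual_ball_open_dist_ball Bphi oV Vphi.
  by exists eps => // psi [Bpsi dpsi]; apply: VU; split => //; exact: epsV.
case=> eps eps0 epsU; have [V [oV Vphi Vdist]] := dual_dist_ball_open phi eps0.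
by exists V; split => // psi [Vpsi Bpsi]; apply: epsU; split => //; exact: Vdist.
Qed.

End CountableTest.
End DualBall.

Unset Implicit Arguments.

Theorem proposition2p10 (R : realType) (Omega : pseudoMetricType R)
  (L : set (Omega -> R)) (c : (Omega -> R) -> R) :
  hausdorff_space Omega -> compact [set: Omega] ->
  admissible_space L -> capacity L c ->
  (exists D : set (Omega -> R),
     [/\ countable D, D `<=` L1set L c &
         forall g, L1set L c g -> forall e : R, 0 < e ->
           exists2 d, D d & (cap_ext L c (fun x => g x - d x)%R < e%:E)%E])
  /\ (compact (dual_unit_ball L c : set {ptws (Omega -> R) -> R})
      /\ metrizable_subset (R := R)
           (dual_unit_ball L c : set {ptws (Omega -> R) -> R})).
Proof.
(* Omega is pseudometric. *)
move=> _ compactOmega admL capc.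
have [e eL e_dense] :=
  uniformly_dense_seq compactOmega (L_continuous admL) (L_cst admL 0).
split; last split.
- exists (range e); split; first exact: card_image_le.
    by move=> _ [n _ <-]; exact: L_subset_L1set.
  move=> g g1 eps eps0; have [n gn] := L1set_approx_seq admL capc e_dense g1 eps0.
  by exists (e n) => //; exists n.
- exact: dual_ball_compact.
- exact: dual_ball_metrizable eL e_dense.
Qed.
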